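(* There exists a dataset of size $n$ for which the disagreement coefficient of the class of binary decision trees (of height at most $d\ge2$, over $\mathrm{dim}\ge2$ input dimensions) is $\Omega(n)$, even if nodes are restricted to test dimensions that are unique along every root-to-leaf path.
   Context: A decision tree routes a point $x\in\mathbb{R}^{\mathrm{dim}}$ from the root; each internal node compares one coordinate $x_a$ with a threshold, each leaf carries a label in $\{0,1\}$. For a dataset $S$ of $n$ points and class $H$: $D_S(h,h')=\frac1n\sum_{x\in S}\mathbb{I}(h(x)\ne h'(x))$, $B_H(h,r)=\{h'\in H:D_S(h,h')\le r\}$, $\mathrm{DIS}_S(V)=\{x\in S:\exists h_1,h_2\in V,h_1(x)\ne h_2(x)\}$, $\theta_h=\sup_{r>0}\frac{|\mathrm{DIS}_S(B_H(h,r))|}{rn}$, $\theta=\sup_{h\in H}\theta_h$. *)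

From HB Require Import structures.
From mathcomp Require Import all_boot all_order all_algebra.
From mathcomp Require Import boolp classical_sets reals constructive_ereal ereal.
Set Implicit Arguments. Unset Strict Implicit. Unset Printing Implicit Defensive.
Import Order.TTheory GRing.Theory Num.Theory.
Local Open Scope ring_scope.
Local Open Scope classical_set_scope.

Inductive dtree (R : Type) (dim : nat) :=
| Leaf of bool
| Node of 'I_dim & R & dtree R dim & dtree R dim.

Arguments Leaf {R dim}.

Fixpoint dt_eval (R : realType) (dim : nat) (T : dtree R dim) (x : 'rV[R]_dim) : bool :=
  match T with
  | Leaf b => b
  | Node a t l r => if x ord0 a <= t then dt_eval l x else dt_eval r x
  end.

Fixpoint dt_height (R : Type) (dim : nat) (T : dtree R dim) : nat :=
  match T with
  | Leaf _ => 0
  | Node _ _ l r => (maxn (dt_height l) (dt_height r)).+1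
  end.

Fixpoint dt_unique_path (R : Type) (dim : nat) (used : seq 'I_dim) (T : dtree R dim) : bool :=
  match T with
  | Leaf _ => true
  | Node a _ l r => (a \notin used) && dt_unique_path (a :: used) l
                                   && dt_unique_path (a :: used) r
  end.

Definition DT_class (R : realType) (dim d : nat) : set ('rV[R]_dim -> bool) :=
  [set h | exists T : dtree R dim, (dt_height T <= d)%N /\ h = dt_eval T].

Definition DT_unique_class (R : realType) (dim d : nat) : set ('rV[R]_dim -> bool) :=
  [set h | exists T : dtree R dim,
      (dt_height T <= d)%N /\ dt_unique_path [::] T /\ h = dt_eval T].

Section Disagreement.
Variables (R : realType) (X : Type) (n : nat) (S : 'I_n -> X).

Definition distS (h h' : X -> bool) : R :=
  (#|[set i : 'I_n | h (S i) != h' (S i)]|)%:R / n%:R.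

Definition ballH (H : set (X -> bool)) (h : X -> bool) (r : R) : set (X -> bool) :=
  [set h' | H h' /\ distS h h' <= r].

(* DIS_S(V), as a set of indices of points of S *)
Definition DIS (V : set (X -> bool)) : {set 'I_n} :=
  [set i : 'I_n | `[< exists h1 h2, V h1 /\ V h2 /\ h1 (S i) != h2 (S i) >]].

Definition theta_h (H : set (X -> bool)) (h : X -> bool) : \bar R :=
  ereal_sup [set ((#|DIS (ballH H h r)|)%:R / (r * n%:R))%:E | r in [set r : R | 0 < r]].

Definition theta (H : set (X -> bool)) : \bar R :=
  ereal_sup [set theta_h H h | h in H].

End Disagreement.

From HB Require Import structures.
From mathcomp Require Import all_boot all_order all_algebra.
From mathcomp Require Import boolp classical_sets reals constructive_ereal ereal.
Set Implicit Arguments. Unset Strict Implicit. Unset Printing Implicit Defensive.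
Import Order.TTheory GRing.Theory Num.Theory.
Local Open Scope ring_scope.

(* If [H] contains [h0] together with, for every sample point, a hypothesis
   that flips [h0] at that point only, then the ball of radius [1/n] around
   [h0] already disagrees on the whole sample, so [theta_h0 >= n / (n * 1/n) = n].
   Decision trees of height 2 realise such flips for the points
   [x_j = (j, -j, ..., -j)]: the tree testing [x_0 <= i] and then [x_1 <= -i]
   accepts exactly [x_i], and it tests two distinct coordinates. *)

Section FlipLowerBound.
Variables (R : realType) (X : Type) (n : nat) (S : 'I_n -> X).

Lemma distSxx (h : X -> bool) : distS R S h h = 0.
Proof.
rewrite /distS (@eq_card0 _ _) ?mul0r // => j.
by apply/negbTE/negP => /set_mem /=; rewrite eqxx.
Qed.

Lemma distS_flip (h h' : X -> bool) (i : 'I_n) :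
  (forall j, (h' (S j) != h (S j)) = (j == i)) -> distS R S h h' = n%:R^-1.
Proof.
move=> flip; rewrite /distS (@eq_card1 _ i) ?mul1r // => j.
by rewrite inE -flip eq_sym; apply/idP/idP => [/set_mem | /mem_set].
Qed.

Lemma DIS_ball_flips (H : set (X -> bool)) (h0 : X -> bool)
    (hs : 'I_n -> X -> bool) :
  H h0 -> (forall i, H (hs i)) ->
  (forall i j, (hs i (S j) != h0 (S j)) = (j == i)) ->
  DIS S (ballH S H h0 (n%:R^-1 : R)) = [set: 'I_n].
Proof.
move=> Hh0 Hhs flip; apply/setP => i; rewrite !inE; apply/asboolP.
exists h0, (hs i); split; [|split].
- by split; rewrite // distSxx invr_ge0 ler0n.
- by split; rewrite // (distS_flip (flip i)).
- by rewrite eq_sym flip.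
Qed.

Lemma theta_ge_flips (H : set (X -> bool)) (h0 : X -> bool)
    (hs : 'I_n -> X -> bool) :
  (0 < n)%N -> H h0 -> (forall i, H (hs i)) ->
  (forall i j, (hs i (S j) != h0 (S j)) = (j == i)) ->
  ((n%:R : R)%:E <= theta R S H)%E.
Proof.
move=> n_gt0 Hh0 Hhs flip.
have n_neq0 : (n%:R : R) != 0 by rewrite pnatr_eq0 -lt0n.
apply: le_trans; last by apply: ereal_sup_ubound; exists h0.
apply: le_trans; last first.
  by apply: ereal_sup_ubound; exists n%:R^-1; rewrite //= invr_gt0 ltr0n.
by rewrite (DIS_ball_flips Hh0 Hhs flip) cardsT card_ord mulVf // divr1.
Qed.

End FlipLowerBound.

Section Spikes.
Variables (R : realType) (dim : nat).

Definition line_point (j : nat) : 'rV[R]_dim.+2 :=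
  \row_(a < dim.+2) (if a == ord0 then j%:R else - j%:R).

Lemma line_point_inj : injective line_point.
Proof.
by move=> i j /rowP /(_ ord0); rewrite !mxE eqxx => /eqP; rewrite eqr_nat => /eqP.
Qed.

Definition spike (i : nat) : dtree R dim.+2 :=
  Node ord0 i%:R (Node (@Ordinal dim.+2 1 isT) (- i%:R) (Leaf true) (Leaf false))
    (Leaf false).

Lemma spike_eval (i j : nat) : dt_eval (spike i) (line_point j) = (j == i).
Proof.
rewrite /= !mxE /= lerN2 !ler_nat eqn_leq.
by case: (j <= i)%N; case: (i <= j)%N.
Qed.

Lemma spike_in_DT_unique_class (d i : nat) :
  (2 <= d)%N -> @DT_unique_class R dim.+2 d (dt_eval (spike i)).
Proof. by exists (spike i). Qed.

Lemma leaf_in_DT_unique_class (d : nat) (b : bool) :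
  @DT_unique_class R dim.+2 d (dt_eval (Leaf b)).
Proof. by exists (Leaf b). Qed.

End Spikes.

Lemma DT_unique_class_sub (R : realType) (dim d : nat) :
  (@DT_unique_class R dim d `<=` @DT_class R dim d)%classic.
Proof. by move=> h [T [hT [_ ->]]]; exists T. Qed.

Theorem theorem4 (R : realType) :
  exists (c : R) (N : nat), 0 < c /\
    forall d dim n : nat, (2 <= d)%N -> (2 <= dim)%N -> (N <= n)%N ->
      exists S : 'I_n -> 'rV[R]_dim,
        injective S /\
        ((c * n%:R)%:E <= theta R S (@DT_unique_class R dim d))%E /\
        ((c * n%:R)%:E <= theta R S (@DT_class R dim d))%E.
Proof.
exists 1, 1%N; split => // d [|[|dim]] n // d_ge2 _ n_gt0.
pose S (j : 'I_n) := line_point R dim j.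
pose flips (i : 'I_n) := dt_eval (spike R dim i).
have flipsE i j : (flips i (S j) != dt_eval (Leaf false) (S j)) = (j == i).
  by rewrite /flips /S spike_eval val_eqE; case: (j == i).
have const_in := leaf_in_DT_unique_class R dim d false.
have spikes_in (i : 'I_n) := spike_in_DT_unique_class R dim i d_ge2.
have unique_bound := theta_ge_flips R n_gt0 const_in spikes_in flipsE.
have class_bound := theta_ge_flips R n_gt0 (DT_unique_class_sub const_in)
  (fun i => DT_unique_class_sub (spikes_in i)) flipsE.
exists S; rewrite mul1r; split=> //.
by move=> i j /line_point_inj /val_inj.
Qed.
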